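(* Let $n\ge 1$, $1\le m\le n$, $\eta>0$, and let $f:\mathbb{R}^n\to\mathbb{R}$ belong to $\mathcal{F}_{\sigma,L}(\mathbb{R}^n)$ for some constants $0<\sigma\le L$, with minimizer ${\bm x}^*$. Define \[ \gamma=\frac{\sigma/L}{53}\left(\frac{1-\sqrt{1-\sigma/L}}{1+\sqrt{1-\sigma/L}}\right)^2,\qquad \varepsilon=\frac{8nL^2}{\sigma}\Big(1+\frac{n}{m\gamma}\Big)\eta^2, \] and \[ T_0=\left\lceil \frac{n}{m\gamma}\log\frac{(f({\bm x}_0)-f({\bm x}^* ))(1+\frac{n}{m\gamma})}{\varepsilon}\right\rceil . \] Let ${\bm x}_0,{\bm x}_1,\dots$ be the iterates of $\mathrm{BlockCD}[n,m]$ (described in the context) started at ${\bm x}_0$ with line-search accuracy $\eta$, using the deterministic pairwise comparison oracle. Then for every $T\ge T_0$, \[ \mathbb{E}[f({\bm x}_T)-f({\bm x}^* )]\le \varepsilon, \] where the expectation is over the random choice of coordinates made by the algorithm.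
   Context: $\|\cdot\|$ is the Euclidean norm. A function $f:\mathbb{R}^n\to\mathbb{R}$ is $\sigma$-strongly convex if $f({\bm y})\ge f({\bm x})+\nabla f({\bm x})^T({\bm y}-{\bm x})+\frac{\sigma}{2}\|{\bm x}-{\bm y}\|^2$ for all ${\bm x},{\bm y}$, and $L$-strongly smooth if $\|\nabla f({\bm x})-\nabla f({\bm y})\|\le L\|{\bm x}-{\bm y}\|$ for all ${\bm x},{\bm y}$; $\mathcal{F}_{\sigma,L}(\mathbb{R}^n)$ denotes the class of functions on $\mathbb{R}^n$ that are both $\sigma$-strongly convex and $L$-strongly smooth. The deterministic pairwise comparison (PC) oracle is the map $O_f({\bm x},{\bm y})=\mathrm{sign}\{f({\bm y})-f({\bm x})\}\in\{-1,+1\}$; the algorithm accesses $f$ only through this oracle. PC-based line search: given a point ${\bm x}$, a direction ${\bm d}$ and an accuracy, it approximately minimizes $\alpha\mapsto f({\bm x}+\alpha{\bm d})$ using only oracle calls: starting from $\alpha=0$ with brackets $\alpha^\pm=\pm1$ (one of which is reset to $0$ if the oracle comparisons at ${\bm x}\pm{\bm d}$ show $f$ decreases only on one side), it doubles each bracket endpoint $\alpha^\pm$ while $O_f({\bm x},{\bm x}+\alpha^\pm{\bm d})<0$, and then repeatedly compares $f$ at the current point ${\bm x}+\alpha{\bm d}$ with $f$ at the midpoints ${\bm x}+\frac12(\alpha+\alpha^\pm){\bm d}$, moving the current point to a midpoint with smaller value (and shrinking the bracket accordingly) or otherwise shrinking both brackets toward $\alpha$, until the bracket width is at most the accuracy;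 ''solving within accuracy $a$'' means the returned value lies within $a$ of the exact one-dimensional minimizer. $\mathrm{BlockCD}[n,m]$: input ${\bm x}_0\in\mathbb{R}^n$ and $\eta>0$. At iteration $t=0,1,\dots$: choose $m$ coordinates $i_1,\dots,i_m$ out of $\{1,\dots,n\}$ according to the uniform distribution; (direction estimate step) for each $k=1,\dots,m$ solve $\min_{\alpha\in\mathbb{R}} f({\bm x}_t+\alpha{\bm e}_{i_k})$ within accuracy $\eta/2$ by the PC-based line search, obtaining $\alpha_{t,i_k}$ (here ${\bm e}_i$ is the $i$-th unit basis vector); set ${\bm d}_t=\sum_{k=1}^m\alpha_{t,i_k}{\bm e}_{i_k}$, and if ${\bm d}_t={\bm 0}$ add $\eta/2$ to its $i_1$-th component; (search step) solve $\min_\beta f({\bm x}_t+\beta{\bm d}_t/\|{\bm d}_t\|)$ within accuracy $\eta$ by the PC-based line search, obtaining $\beta_t$; set ${\bm x}_{t+1}={\bm x}_t+\beta_t{\bm d}_t/\|{\bm d}_t\|$. *)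

From HB Require Import structures.
From mathcomp Require Import all_boot all_order all_algebra.
From mathcomp Require Import all_classical all_reals all_analysis.
Set Implicit Arguments. Unset Strict Implicit. Unset Printing Implicit Defensive.
Import Order.TTheory GRing.Theory Num.Theory numFieldNormedType.Exports.
Local Open Scope ring_scope.

Definition vdot (R : realType) (n : nat) (x y : 'rV[R]_n) : R :=
  \sum_(i < n) x 0 i * y 0 i.
Definition enorm (R : realType) (n : nat) (x : 'rV[R]_n) : R :=
  Num.sqrt (vdot x x).

Definition unitv (R : realType) (n : nat) (i : 'I_n) : 'rV[R]_n :=
  delta_mx 0 i.

Definition gradient (R : realType) (n : nat) (f : 'rV[R]_n -> R^o)
  (x : 'rV[R]_n) : 'rV[R]_n :=
  \row_(i < n) ('d f x (unitv R i)).

Definition strongly_convex (R : realType) (n : nat) (sigma : R)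
  (f : 'rV[R]_n -> R^o) : Prop :=
  (forall x, differentiable f x) /\
  forall x y : 'rV[R]_n,
    f x + vdot (gradient f x) (y - x) + sigma / 2 * enorm (x - y) ^+ 2 <= f y.

Definition strongly_smooth (R : realType) (n : nat) (L : R)
  (f : 'rV[R]_n -> R^o) : Prop :=
  (forall x, differentiable f x) /\
  forall x y : 'rV[R]_n,
    enorm (gradient f x - gradient f y) <= L * enorm (x - y).

Definition F_class (R : realType) (n : nat) (sigma L : R)
  (f : 'rV[R]_n -> R^o) : Prop :=
  strongly_convex sigma f /\ strongly_smooth L f.

(* A line-search routine ls : x -> d -> accuracy -> step "solves
   min_alpha f(x + alpha d) within accuracy a": its output lies within a of
   the exact one-dimensional minimizer (for d <> 0, a > 0). *)
Definition line_search_accurate (R : realType) (n : nat)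
  (f : 'rV[R]_n -> R^o) (ls : 'rV[R]_n -> 'rV[R]_n -> R -> R) : Prop :=
  forall (x d : 'rV[R]_n) (a : R), d != 0 -> 0 < a ->
    exists2 al : R, (forall b : R, f (x + al *: d) <= f (x + b *: d))
                    & `|ls x d a - al| <= a.

(* One iteration of BlockCD[n,m] with the chosen coordinates
   i_k = s (k-1), k = 1..m (s injective). *)
Definition bcd_step (R : realType) (n m : nat)
  (ls : 'rV[R]_n -> 'rV[R]_n -> R -> R) (eta : R)
  (s : {ffun 'I_m -> 'I_n}) (x : 'rV[R]_n) : 'rV[R]_n :=
  let cs := [seq s k | k <- enum 'I_m] in
  let d0 := \sum_(i <- cs) ls x (unitv R i) (eta / 2) *: unitv R i in
  let d := if d0 == 0 then
             match ohead cs with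
             | Some i1 => d0 + (eta / 2) *: unitv R i1
             | None => d0
             end
           else d0 in
  let u := (enorm d)^-1 *: d in
  x + ls x u eta *: u.

Definition bcd_iter (R : realType) (n m : nat)
  (ls : 'rV[R]_n -> 'rV[R]_n -> R -> R) (eta : R) (x0 : 'rV[R]_n)
  (ss : seq {ffun 'I_m -> 'I_n}) : 'rV[R]_n :=
  foldl (fun x s => bcd_step ls eta s x) x0 ss.

Definition coord_choice (n m : nat) : pred {ffun 'I_m -> 'I_n} :=
  [pred s : {ffun 'I_m -> 'I_n} | injectiveb (fun k : 'I_m => s k)].

(* Sample space of the first T iterations: T independent uniform choices. *)
Definition sample_space (n m T : nat) : pred {ffun 'I_T -> {ffun 'I_m -> 'I_n}} :=
  [pred ss : {ffun 'I_T -> {ffun 'I_m -> 'I_n}} | [forall t : 'I_T, @coord_choice n m (ss t)]].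

Definition bcd_expected_gap (R : realType) (n m : nat) (f : 'rV[R]_n -> R^o)
  (ls : 'rV[R]_n -> 'rV[R]_n -> R -> R) (eta : R) (x0 xstar : 'rV[R]_n)
  (T : nat) : R :=
  (#|@sample_space n m T|%:R)^-1 *
  \sum_(ss in @sample_space n m T)
     (f (bcd_iter ls eta x0 [seq ss t | t <- enum 'I_T]) - f xstar).

Definition gamma_const (R : realType) (sigma L : R) : R :=
  (sigma / L) / 53 *
  ((1 - Num.sqrt (1 - sigma / L)) / (1 + Num.sqrt (1 - sigma / L))) ^+ 2.

Definition eps_const (R : realType) (n m : nat) (sigma L eta : R) : R :=
  8 * n%:R * L ^+ 2 / sigma *
  (1 + n%:R / (m%:R * gamma_const sigma L)) * eta ^+ 2.

(* Write M = L - sigma / 2. Strong convexity and the Lipschitz gradient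
   sandwich f between the quadratic models f x + <g x, v> + sigma / 2 |v|^2
   and f x + <g x, v> + M |v|^2. Hence an exact minimizer a_i of f along a
   coordinate controls the partial derivative g_i, and the step
   sigma / (16 M) along the (inexact) block direction decreases f by at least
   sigma / (256 M^2) * sum_k g_(i_k)^2 up to an error of order m eta^2. The
   final line search does at least as well up to M eta^2, because at the exact
   line minimizer the gradient is orthogonal to the search direction.
   Averaging over the uniformly chosen blocks picks every coordinate with
   probability m / n, and |g|^2 >= 2 sigma (f - f xstar) turns this into
   E gap_(t+1) <= (1 - rho) E gap_t + N with rho >= m gamma / n; unrolling the
   recursion with 1 - r <= exp (- r) gives the bound for T >= T0. *)

From HB Require Import structures.
From mathcomp Require Import all_boot all_order all_algebra all_fingroup.
From mathcomp Require Import all_classical all_reals all_analysis.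
From mathcomp Require Import ring lra.
Import Order.TTheory GRing.Theory Num.Theory numFieldNormedType.Exports.
Local Open Scope ring_scope.
Set Implicit Arguments. Unset Strict Implicit. Unset Printing Implicit Defensive.

Section EuclideanProduct.
Variables (R : realType) (n : nat).
Implicit Types (x y z : 'rV[R]_n) (a : R).

Lemma vdotC x y : vdot x y = vdot y x.
Proof. by apply: eq_bigr => i _; rewrite mulrC. Qed.

Lemma vdotDr x y z : vdot x (y + z) = vdot x y + vdot x z.
Proof. by rewrite /vdot -big_split; apply: eq_bigr => i _; rewrite !mxE mulrDr. Qed.

Lemma vdotZr a x y : vdot x (a *: y) = a * vdot x y.
Proof. by rewrite /vdot mulr_sumr; apply: eq_bigr => i _; rewrite !mxE mulrCA. Qed.

Lemma vdotNr x y : vdot x (- y) = - vdot x y.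
Proof. by rewrite -scaleN1r vdotZr mulN1r. Qed.

Lemma vdotBr x y z : vdot x (y - z) = vdot x y - vdot x z.
Proof. by rewrite vdotDr vdotNr. Qed.

Lemma vdotZl a x y : vdot (a *: x) y = a * vdot x y.
Proof. by rewrite vdotC vdotZr vdotC. Qed.

Lemma vdotNl x y : vdot (- x) y = - vdot x y.
Proof. by rewrite vdotC vdotNr vdotC. Qed.

Lemma vdotBl x y z : vdot (y - z) x = vdot y x - vdot z x.
Proof. by rewrite vdotC vdotBr !(vdotC x). Qed.

Lemma vdotNN x : vdot (- x) (- x) = vdot x x.
Proof. by rewrite vdotNl vdotNr opprK. Qed.

Lemma vdotvv_ge0 x : 0 <= vdot x x.
Proof. by apply: sumr_ge0 => i _; rewrite -expr2 sqr_ge0. Qed.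

Lemma vdotvv_eq0 x : (vdot x x == 0) = (x == 0).
Proof.
apply/idP/eqP => [|->]; last by rewrite /vdot big1 // => i _; rewrite mxE mul0r.
rewrite psumr_eq0 => [/allP x0|i _]; last by rewrite -expr2 sqr_ge0.
apply/rowP => i; have /implyP := x0 i (mem_index_enum i).
by rewrite mulf_eq0 orbb mxE => /(_ isT) /eqP.
Qed.

Lemma enorm_sqr x : enorm x ^+ 2 = vdot x x.
Proof. by rewrite sqr_sqrtr // vdotvv_ge0. Qed.

Lemma enorm_eq0 x : (enorm x == 0) = (x == 0).
Proof. by rewrite -vdotvv_eq0 -enorm_sqr sqrf_eq0. Qed.

Lemma vdot_young c x y : 0 < c -> vdot x y <= vdot x x / (2 * c) + c / 2 * vdot y y.
Proof.
move=> c_gt0; rewrite /vdot mulr_suml mulr_sumr -big_split /=.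
apply: ler_sum => i _.
have sq_ge0 : 0 <= (x 0 i - c * y 0 i) ^+ 2 / (2 * c).
  by rewrite divr_ge0 ?sqr_ge0 // mulr_ge0 // ltW.
suff -> : x 0 i * x 0 i / (2 * c) + c / 2 * (y 0 i * y 0 i) =
  x 0 i * y 0 i + (x 0 i - c * y 0 i) ^+ 2 / (2 * c) by rewrite lerDl.
by field; rewrite gt_eqF.
Qed.

Definition vnormalize x := (enorm x)^-1 *: x.

Lemma vdot_vnormalize x : x != 0 -> vdot (vnormalize x) (vnormalize x) = 1.
Proof.
rewrite -enorm_eq0 => x0.
by rewrite vdotZl vdotZr -enorm_sqr mulrA -expr2 -exprMn mulVf ?expr1n.
Qed.

Lemma vdot_unitv x i : vdot x (unitv R i) = x 0 i.
Proof.
rewrite /vdot (bigD1 i) //= big1 ?addr0; first by rewrite mxE !eqxx mulr1.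
by move=> j /negbTE ji; rewrite mxE ji andbF mulr0.
Qed.

Lemma unitv_neq0 i : unitv R i != 0 :> 'rV[R]_n.
Proof. by apply/eqP => /rowP /(_ i) /eqP; rewrite !mxE !eqxx oner_eq0. Qed.

Variables (m : nat) (s : 'I_m -> 'I_n) (c : 'I_m -> R).

Lemma vdot_sum_unitv x :
  vdot x (\sum_(k < m) c k *: unitv R (s k)) = \sum_(k < m) c k * x 0 (s k).
Proof.
rewrite {1}/vdot (eq_bigr (fun j => \sum_(k < m) x 0 j * (c k *: unitv R (s k)) 0 j));
  last by move=> j _; rewrite summxE mulr_sumr.
rewrite exchange_big /=; apply: eq_bigr => k _.
by rewrite -vdot_unitv -vdotZr.
Qed.

Lemma vdot_sum_unitvK : injective s ->
  vdot (\sum_(k < m) c k *: unitv R (s k)) (\sum_(k < m) c k *: unitv R (s k))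
  = \sum_(k < m) c k ^+ 2.
Proof.
move=> s_inj; rewrite vdot_sum_unitv; apply: eq_bigr => k _.
rewrite summxE (bigD1 k) //= big1 ?addr0; first by rewrite !mxE !eqxx mulr1 expr2.
by move=> l lk; rewrite !mxE (inj_eq s_inj) eq_sym (negbTE lk) mulr0.
Qed.

End EuclideanProduct.

Lemma strongly_convex_lower_model (R : realType) n (sigma : R) (f : 'rV[R]_n -> R^o) :
  strongly_convex sigma f -> forall x v : 'rV[R]_n,
  f x + vdot (gradient f x) v + sigma / 2 * vdot v v <= f (x + v).
Proof.
case=> _ sc x v; have := sc x (x + v).
by rewrite [x + v - x]addrAC subrr add0r opprD addrA subrr add0r enorm_sqr vdotNN.
Qed.

Section SmoothUpperModel.
Variables (R : realType) (n : nat) (sigma L : R).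
Variables (f : 'rV[R]_n -> R^o) (g : 'rV[R]_n -> 'rV[R]_n).
Hypotheses (sigma_gt0 : 0 < sigma) (sigma_le_L : sigma <= L).
Hypothesis lower_model : forall x v,
  f x + vdot (g x) v + sigma / 2 * vdot v v <= f (x + v).
Hypothesis g_lipschitz : forall x y, enorm (g x - g y) <= L * enorm (x - y).
Implicit Types x y v : 'rV[R]_n.

(* Strong convexity at x + v and Young's inequality on the gradient difference
   replace the usual integration argument, at the price of the constant
   L - sigma / 2 instead of L / 2. *)
Lemma smooth_upper_model x v : f (x + v) <= f x + vdot (g x) v + (L - sigma / 2) * vdot v v.
Proof.
have L_gt0 : 0 < L := lt_le_trans sigma_gt0 sigma_le_L.
have := lower_model (x + v) (- v); rewrite addrK vdotNN vdotNr vdotC.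
set dg := g (x + v) - g x.
have -> : vdot v (g (x + v)) = vdot (g x) v + vdot dg v.
  by rewrite /dg vdotBl addrCA subrr addr0 vdotC.
have lip : vdot dg dg <= L ^+ 2 * vdot v v.
  have := g_lipschitz (x + v) x; rewrite [x + v - x]addrAC subrr add0r -/dg => lip.
  rewrite -!enorm_sqr -exprMn lerXn2r // nnegrE ?sqrtr_ge0 //.
  by rewrite mulr_ge0 ?sqrtr_ge0 ?ltW.
have dg_v : vdot dg v <= L * vdot v v.
  apply: le_trans (vdot_young dg v L_gt0) _.
  have -> : L * vdot v v = L ^+ 2 * vdot v v / (2 * L) + L / 2 * vdot v v.
    by field; rewrite gt_eqF.
  by rewrite lerD2r ler_pM2r // invr_gt0 mulr_gt0.
have := vdotvv_ge0 v; lra.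
Qed.

End SmoothUpperModel.

Lemma coord_model_le (R : realFieldType) (sg M a c G : R) :
  0 < sg -> sg <= M -> 4 * M * G * a + 4 * M * sg * a ^+ 2 + G ^+ 2 <= 0 ->
  sg / (8 * M) * (c * G) + M * (sg / (8 * M)) ^+ 2 * c ^+ 2
    <= - (sg / (128 * M ^+ 2) * G ^+ 2) + sg / 2 * (c - a) ^+ 2.
Proof.
move=> sg_gt0 sgM a_min; have M_gt0 : 0 < M := lt_le_trans sg_gt0 sgM.
have [M_ge0 sg_ge0] := (ltW M_gt0, ltW sg_gt0).
have key : 16 * M * c * G + 2 * M * sg * c ^+ 2 + G ^+ 2 <= 64 * M ^+ 2 * (c - a) ^+ 2.
  rewrite -[c in X in X <= _](subrK a) [_ - a + a]addrC; move: (c - a) => d.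
  have Msg_ge0 : 0 <= M * sg by rewrite mulr_ge0.
  have F1 : 0 <= (3 * G - 8 * M * d) ^+ 2 := sqr_ge0 _.
  have F2 : 0 <= M * sg * (a - d) ^+ 2 := mulr_ge0 Msg_ge0 (sqr_ge0 _).
  have F3 : 0 <= M * sg * a ^+ 2 := mulr_ge0 Msg_ge0 (sqr_ge0 _).
  have F4 : 0 <= M * (M - sg) * d ^+ 2.
    by apply: mulr_ge0; [rewrite mulr_ge0 ?subr_ge0 | exact: sqr_ge0].
  have F5 : 0 <= M ^+ 2 * d ^+ 2 by rewrite mulr_ge0 ?sqr_ge0.
  (* 3 (rhs - lhs) = - 12 (lhs of a_min) + F1 + 6 F2 + 36 F3 + 12 F4 + 116 F5 *)
  lra.
have k_ge0 : 0 <= sg / (128 * M ^+ 2) by rewrite divr_ge0 ?mulr_ge0.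
have := ler_wpM2l k_ge0 key.
have -> : sg / (128 * M ^+ 2) * (16 * M * c * G + 2 * M * sg * c ^+ 2 + G ^+ 2)
  = sg / (8 * M) * (c * G) + M * (sg / (8 * M)) ^+ 2 * c ^+ 2 + sg / (128 * M ^+ 2) * G ^+ 2.
  by field; rewrite gt_eqF.
have -> : sg / (128 * M ^+ 2) * (64 * M ^+ 2 * (c - a) ^+ 2) = sg / 2 * (c - a) ^+ 2.
  by field; rewrite gt_eqF.
lra.
Qed.

Lemma bcd_stepE (R : realType) n m (ls : 'rV[R]_n -> 'rV[R]_n -> R -> R) (eta : R)
    (s : {ffun 'I_m.+1 -> 'I_n}) x : 0 < eta ->
  exists2 c : 'I_m.+1 -> R,
    forall k, `|c k - ls x (unitv R (s k)) (eta / 2)| <= eta / 2 &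
    let d := \sum_(k < m.+1) c k *: unitv R (s k) in
    d != 0 /\ bcd_step ls eta s x = x + ls x (vnormalize d) eta *: vnormalize d.
Proof.
move=> eta_gt0; pose a k := ls x (unitv R (s k)) (eta / 2).
have half_ge0 : 0 <= eta / 2 by rewrite divr_ge0 // ltW.
rewrite /bcd_step big_map big_enum enum_ordSl /=.
case: ifP => [/eqP d0_eq0 | /negbT d0_neq0]; last first.
  by exists a => [k|]; rewrite ?subrr ?normr0.
exists (fun k => a k + (k == ord0)%:R * (eta / 2)) => [k|].
  by rewrite addrAC subrr add0r; case: (_ == _); rewrite ?mul1r ?mul0r ?normr0 ?ger0_norm.
have -> : \sum_(k < m.+1) (a k + (k == ord0)%:R * (eta / 2)) *: unitv R (s k)
    = \sum_(k < m.+1) a k *: unitv R (s k) + eta / 2 *: unitv R (s ord0).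
  under eq_bigr do rewrite scalerDl; rewrite big_split /=; congr (_ + _).
  rewrite (bigD1 ord0) //= ?eqxx mul1r big1 ?addr0 // => k /negbTE ->.
  by rewrite mul0r scale0r.
split=> //; rewrite d0_eq0 add0r scaler_eq0 negb_or unitv_neq0 andbT.
by rewrite gt_eqF // divr_gt0.
Qed.

Section CoordChoice.
Variables (n m : nat).
Local Notation C := (@coord_choice n m).

Definition coord_choice_at (k : 'I_m) (i : 'I_n) :=
  [pred s : {ffun 'I_m -> 'I_n} | (s \in C) && (s k == i)].

Lemma card_coord_choice_at_le k i j :
  (#|coord_choice_at k i| <= #|coord_choice_at k j|)%N.
Proof.
pose swap (s : {ffun 'I_m -> 'I_n}) := [ffun l => tperm i j (s l)].
have swapK : involutive swap by move=> s; apply/ffunP => l; rewrite !ffunE tpermK.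
rewrite -(card_imset _ (inv_inj swapK)); apply: subset_leq_card.
apply/fintype.subsetP => _ /imsetP [s /andP [/injectiveP s_inj /eqP sk] ->].
rewrite !inE ffunE sk tpermL eqxx andbT; apply/injectiveP => l1 l2.
by rewrite !ffunE => /perm_inj /s_inj.
Qed.

Lemma card_coord_choice_at k i : (n * #|coord_choice_at k i|)%N = #|C|.
Proof.
have -> : #|C| = (\sum_(j < n) #|coord_choice_at k j|)%N.
  rewrite -sum1_card (partition_big (fun s : {ffun _ -> _} => s k) predT) //=.
  by apply: eq_bigr => j _; rewrite -sum1_card; apply: eq_bigl => s; rewrite inE.
rewrite -[n in (n * _)%N]card_ord -sum_nat_const; apply: eq_bigr => j _.
by apply/eqP; rewrite eqn_leq !card_coord_choice_at_le.
Qed.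

Lemma sum_coord_choice (R : numFieldType) (h : 'I_n -> R) : (0 < n)%N ->
  \sum_(s in C) \sum_(k < m) h (s k) = m%:R * #|C|%:R / n%:R * \sum_(i < n) h i.
Proof.
move=> n_gt0; rewrite exchange_big /=.
have sum_at k : \sum_(s in C) h (s k) = #|C|%:R / n%:R * \sum_(i < n) h i.
  rewrite (partition_big (fun s : {ffun _ -> _} => s k) predT) //= mulr_sumr.
  apply: eq_bigr => i _; rewrite (eq_bigr (fun=> h i)) => [|s /andP [_ /eqP ->] //].
  rewrite sumr_const -(card_coord_choice_at k i) natrM.
  rewrite [_ * _ / _]mulrC mulKf ?pnatr_eq0 -?lt0n // mulr_natl.
  by congr (_ *+ _); apply: eq_card => s; rewrite !inE.
by rewrite (eq_bigr _ (fun k _ => sum_at k)) sumr_const card_ord -[_ *+ m]mulr_natl !mulrA.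
Qed.

Lemma coord_choice_card_gt0 : (m <= n)%N -> (0 < #|C|)%N.
Proof.
move=> mn; apply/card_gt0P; exists [ffun k => widen_ord mn k].
by rewrite inE /=; apply/injectiveP => k l; rewrite !ffunE => /(congr1 val) /= /val_inj.
Qed.

End CoordChoice.

(* The rate rho and the noise N of the recursion E gap_(t+1) <= (1 - rho) E gap_t + N,
   with M the curvature of the upper quadratic model. *)
Definition bcd_rate (R : realType) (n m : nat) (sigma M : R) : R :=
  m%:R / n%:R * (sigma ^+ 2 / (128 * M ^+ 2)).

Definition bcd_noise (R : realType) (m : nat) (sigma M eta : R) : R :=
  (sigma / 4 * m%:R + M) * eta ^+ 2.

Section Descent.
Variables (R : realType) (n : nat) (sigma M : R).
Variables (f : 'rV[R]_n -> R^o) (g : 'rV[R]_n -> 'rV[R]_n).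
Hypotheses (sigma_gt0 : 0 < sigma) (sigma_le_2M : sigma / 2 <= M).
Hypothesis lower_model : forall x v,
  f x + vdot (g x) v + sigma / 2 * vdot v v <= f (x + v).
Hypothesis upper_model : forall x v, f (x + v) <= f x + vdot (g x) v + M * vdot v v.
Implicit Types x y v : 'rV[R]_n.

Let M_gt0 : 0 < M. Proof. by move: sigma_gt0 sigma_le_2M; lra. Qed.

Lemma gap_le_sqr_grad x y : 2 * sigma * (f x - f y) <= vdot (g x) (g x).
Proof.
have := lower_model x (y - x); rewrite [x + _]addrC subrK => lower.
have := vdot_young (- g x) (y - x) sigma_gt0; rewrite vdotNN vdotNl => young.
by rewrite -ler_pdivlMl ?mulr_gt0 //; lra.
Qed.

Lemma coord_minimizer_ineq x i a :
  (forall b, f (x + a *: unitv R i) <= f (x + b *: unitv R i)) ->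
  4 * M * g x 0 i * a + 4 * M * (sigma / 2) * a ^+ 2 + g x 0 i ^+ 2 <= 0.
Proof.
move=> a_min; set G := g x 0 i.
have e_i : vdot (unitv R i) (unitv R i) = 1 by rewrite vdot_unitv mxE !eqxx.
have lower := lower_model x (a *: unitv R i).
rewrite vdotZr vdot_unitv vdotZr vdotZl e_i mulr1 -/G in lower.
pose b := - G / (2 * M).
have upper := upper_model x (b *: unitv R i).
rewrite vdotZr vdot_unitv vdotZr vdotZl e_i mulr1 -/G in upper.
have b_val : b * G + M * (b * b) = - (G ^+ 2 / (4 * M)) by rewrite /b; field; rewrite gt_eqF.
have decrease : a * G + sigma / 2 * (a * a) <= - (G ^+ 2 / (4 * M)).
  by move: (a_min b); lra.
have := ler_wpM2l (ltW (mulr_gt0 (ltr0n R 4) M_gt0)) decrease.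
have -> : 4 * M * - (G ^+ 2 / (4 * M)) = - G ^+ 2 by field; rewrite gt_eqF.
lra.
Qed.

Lemma line_minimizer_orthogonal x u bs :
  (forall b, f (x + bs *: u) <= f (x + b *: u)) -> vdot (g (x + bs *: u)) u = 0.
Proof.
move=> bs_min; set y := x + bs *: u; set c := vdot (g y) u.
have V_ge0 := vdotvv_ge0 u; set V := vdot u u in V_ge0 *.
pose r := - c / (2 * M * V + 1).
have upper := upper_model y (r *: u).
rewrite vdotZr vdotZr vdotZl -/c -/V in upper.
have y_min : f y <= f (y + r *: u) by rewrite /y -addrA -scalerDl; apply: bs_min.
have den_gt0 : 0 < 2 * M * V + 1 by move: M_gt0; nra.
have : 0 <= r * c + M * (r * (r * V)) by lra.
have -> : r * c + M * (r * (r * V)) = - (c ^+ 2 * ((M * V + 1) / (2 * M * V + 1) ^+ 2)).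
  by rewrite /r; field; rewrite gt_eqF.
rewrite oppr_ge0 pmulr_lle0 ?divr_gt0 ?exprn_gt0 //; last by nra.
by move=> c2_le0; apply/eqP; rewrite -sqrf_eq0 eq_le c2_le0 sqr_ge0.
Qed.

Lemma inexact_line_search_le x u bs b eta : vdot u u = 1 ->
  (forall b', f (x + bs *: u) <= f (x + b' *: u)) -> `|b - bs| <= eta ->
  f (x + b *: u) <= f (x + bs *: u) + M * eta ^+ 2.
Proof.
move=> u_unit bs_min b_close.
have -> : x + b *: u = x + bs *: u + (b - bs) *: u.
  by rewrite -addrA -scalerDl addrCA subrr addr0.
apply: le_trans (upper_model _ _) _.
rewrite vdotZr line_minimizer_orthogonal // mulr0 addr0 vdotZr vdotZl u_unit mulr1.
rewrite lerD2l ler_pM2l // -expr2 -real_normK ?num_real // lerXn2r ?nnegrE //.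
exact: le_trans b_close.
Qed.

Lemma block_model_le m (s : 'I_m -> 'I_n) (a c : 'I_m -> R) x eta : injective s ->
  (forall k b, f (x + a k *: unitv R (s k)) <= f (x + b *: unitv R (s k))) ->
  (forall k, `|c k - a k| <= eta) ->
  f (x + sigma / 2 / (8 * M) *: \sum_(k < m) c k *: unitv R (s k))
    <= f x - sigma / 2 / (128 * M ^+ 2) * \sum_(k < m) g x 0 (s k) ^+ 2
       + sigma / 2 / 2 * (m%:R * eta ^+ 2).
Proof.
move=> s_inj a_min c_close; set t := sigma / 2 / (8 * M).
apply: le_trans (upper_model _ _) _.
rewrite vdotZr vdotZr vdotZl vdot_sum_unitv vdot_sum_unitvK // -!addrA lerD2l.
have -> : t * \sum_(k < m) c k * g x 0 (s k) + M * (t * (t * \sum_(k < m) c k ^+ 2))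
    = \sum_(k < m) (t * (c k * g x 0 (s k)) + M * t ^+ 2 * c k ^+ 2).
  rewrite big_split /= !mulr_sumr; congr (_ + _).
  by apply: eq_bigr => k _; rewrite expr2 !mulrA.
have -> : - (sigma / 2 / (128 * M ^+ 2) * \sum_(k < m) g x 0 (s k) ^+ 2)
      + sigma / 2 / 2 * (m%:R * eta ^+ 2)
    = \sum_(k < m) (- (sigma / 2 / (128 * M ^+ 2) * g x 0 (s k) ^+ 2)
                    + sigma / 2 / 2 * eta ^+ 2).
  rewrite big_split /= sumrN -mulr_sumr sumr_const card_ord.
  by rewrite [m%:R * _]mulr_natl mulrnAr.
apply: ler_sum => k _.
have sg_gt0 : 0 < sigma / 2 by move: sigma_gt0; lra.
have := coord_model_le (c k) sg_gt0 sigma_le_2M (coord_minimizer_ineq (a_min k)).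
have sq_le : (c k - a k) ^+ 2 <= eta ^+ 2.
  by rewrite -real_normK ?num_real // lerXn2r ?nnegrE // (le_trans _ (c_close k)).
have := ler_wpM2l (ltW sg_gt0) sq_le; rewrite -/t; nra.
Qed.

Section BlockStep.
Variables (ls : 'rV[R]_n -> 'rV[R]_n -> R -> R) (eta : R).
Hypotheses (ls_accurate : line_search_accurate f ls) (eta_gt0 : 0 < eta).

Lemma line_search_le x d t : d != 0 ->
  f (x + ls x (vnormalize d) eta *: vnormalize d) <= f (x + t *: d) + M * eta ^+ 2.
Proof.
move=> d_neq0; have u_unit := vdot_vnormalize d_neq0.
have u_neq0 : vnormalize d != 0 by rewrite -vdotvv_eq0 u_unit oner_eq0.
have [bs bs_min bs_close] := ls_accurate x u_neq0 eta_gt0.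
apply: le_trans (inexact_line_search_le u_unit bs_min bs_close) _; rewrite lerD2r.
have -> : t *: d = (t * enorm d) *: vnormalize d.
  by rewrite scalerA -mulrA mulfV ?mulr1 // enorm_eq0.
exact: bs_min.
Qed.

Lemma bcd_step_le m (s : {ffun 'I_m.+1 -> 'I_n}) x : s \in @coord_choice n m.+1 ->
  f (bcd_step ls eta s x) <= f x - sigma / 2 / (128 * M ^+ 2) *
    \sum_(k < m.+1) g x 0 (s k) ^+ 2 + bcd_noise m.+1 sigma M eta.
Proof.
move=> /injectiveP s_inj; have half_gt0 : 0 < eta / 2 by rewrite divr_gt0.
have [a a_min a_close] :=
  fin_all_exists2 (fun k => ls_accurate x (unitv_neq0 R (s k)) half_gt0).
have [c c_close [d_neq0 ->]] := bcd_stepE ls s x eta_gt0.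
apply: le_trans (line_search_le x (sigma / 2 / (8 * M)) d_neq0) _.
have c_near_a k : `|c k - a k| <= eta.
  rewrite -(subrK (ls x (unitv R (s k)) (eta / 2)) (c k)) -addrA.
  by apply: le_trans (ler_normD _ _) _; move: (c_close k) (a_close k); lra.
have := block_model_le s_inj a_min c_near_a.
by rewrite /bcd_noise; lra.
Qed.

Lemma bcd_expected_step_le m xstar x : (0 < m)%N -> (m <= n)%N ->
  #|@coord_choice n m|%:R^-1 *
    \sum_(s in @coord_choice n m) (f (bcd_step ls eta s x) - f xstar)
  <= (1 - bcd_rate n m sigma M) * (f x - f xstar) + bcd_noise m sigma M eta.
Proof.
move=> m_gt0 mn; have n_gt0 := leq_trans m_gt0 mn.
have C_gt0 : 0 < #|@coord_choice n m|%:R :> R by rewrite ltr0n coord_choice_card_gt0.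
have n_neq0 : n%:R != 0 :> R by rewrite pnatr_eq0 -lt0n.
case: m m_gt0 mn C_gt0 => // m _ _; set C := #|_|%:R => C_gt0.
set kappa := sigma / 2 / (128 * M ^+ 2); set gap := f x - f xstar.
set noise := bcd_noise m.+1 sigma M eta.
apply: le_trans (_ : C^-1 * \sum_(s in @coord_choice n m.+1)
    (gap + noise - kappa * \sum_(k < m.+1) g x 0 (s k) ^+ 2) <= _).
  apply: ler_wpM2l; first by rewrite invr_ge0 ltW.
  by apply: ler_sum => s s_C; move: (bcd_step_le x s_C); rewrite -/kappa -/noise /gap; lra.
rewrite sumrB sumr_const -[(gap + noise) *+ _]mulr_natl -mulr_sumr.
rewrite (@sum_coord_choice n m.+1 R (fun i => g x 0 i ^+ 2)) //.
rewrite mulrBr mulKf ?gt_eqF // -/C.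
have -> : \sum_(i < n) g x 0 i ^+ 2 = vdot (g x) (g x) by apply: eq_bigr => i _; rewrite expr2.
have -> : C^-1 * (kappa * (m.+1%:R * C / n%:R * vdot (g x) (g x)))
    = kappa * (m.+1%:R / n%:R) * vdot (g x) (g x).
  by field; rewrite n_neq0 lt0r_neq0.
have rate_eq : bcd_rate n m.+1 sigma M = kappa * (m.+1%:R / n%:R) * (2 * sigma).
  by rewrite /bcd_rate /kappa; field; rewrite n_neq0 lt0r_neq0.
have weight_ge0 : 0 <= kappa * (m.+1%:R / n%:R).
  apply: mulr_ge0; last exact: divr_ge0.
  by apply: divr_ge0; [move: sigma_gt0; lra | rewrite mulr_ge0 ?exprn_ge0 // ltW].
have := ler_wpM2l weight_ge0 (gap_le_sqr_grad x xstar).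
by rewrite rate_eq -/gap; lra.
Qed.

End BlockStep.

End Descent.

Section FfunCons.
Variables (C : finType) (T : nat).

Definition ffun_cons (c : C) (g : {ffun 'I_T -> C}) : {ffun 'I_T.+1 -> C} :=
  [ffun i => if unlift ord0 i is Some j then g j else c].

Lemma ffun_cons_bij : bijective (fun p : C * {ffun 'I_T -> C} => ffun_cons p.1 p.2).
Proof.
exists (fun ss : {ffun 'I_T.+1 -> C} => (ss ord0, [ffun j => ss (lift ord0 j)])).
  case=> c g /=; congr (_, _); first by rewrite ffunE unlift_none.
  by apply/ffunP => j; rewrite !ffunE liftK.
move=> ss; apply/ffunP => i; rewrite !ffunE.
by case: unliftP => [j ->|->]; rewrite ?ffunE.
Qed.

Lemma map_ffun_cons c g :
  [seq ffun_cons c g t | t <- enum 'I_T.+1] = c :: [seq g t | t <- enum 'I_T].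
Proof.
rewrite enum_ordSl /= ffunE unlift_none -map_comp; congr (_ :: _).
by apply: eq_map => j /=; rewrite ffunE liftK.
Qed.

Lemma sum_ffun_cons (R : nmodType) (P : pred C) (F : {ffun 'I_T.+1 -> C} -> R) :
  \sum_(ss : {ffun 'I_T.+1 -> C} | [forall t, P (ss t)]) F ss =
  \sum_(c | P c) \sum_(g : {ffun 'I_T -> C} | [forall t, P (g t)]) F (ffun_cons c g).
Proof.
rewrite pair_big /= (reindex _ (onW_bij _ ffun_cons_bij)) /=.
apply: eq_bigl => -[c g] /=.
apply/forallP/andP => [P_ss|[Pc /forallP Pg] i].
  split; first by have := P_ss ord0; rewrite ffunE unlift_none.
  by apply/forallP => j; have := P_ss (lift ord0 j); rewrite ffunE liftK.
by rewrite ffunE; case: unliftP.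
Qed.

End FfunCons.

Section ExpectedGap.
Variables (R : realType) (n m : nat) (f : 'rV[R]_n -> R^o).
Variables (ls : 'rV[R]_n -> 'rV[R]_n -> R -> R) (eta : R) (xstar : 'rV[R]_n).
Local Notation C := (@coord_choice n m).
Local Notation E x T := (bcd_expected_gap m f ls eta x xstar T).

Lemma sum_sample_space_succ T (F : {ffun 'I_T.+1 -> {ffun 'I_m -> 'I_n}} -> R) :
  \sum_(ss in @sample_space n m T.+1) F ss =
  \sum_(c in C) \sum_(ss in @sample_space n m T) F (ffun_cons c ss).
Proof. exact: sum_ffun_cons. Qed.

Lemma card_sample_space_succ T :
  #|@sample_space n m T.+1| = (#|C| * #|@sample_space n m T|)%N.
Proof.
apply/eqP; rewrite -(eqr_nat R) natrM -!sum1_card !natr_sum sum_sample_space_succ.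
by rewrite mulr_suml; apply/eqP/eq_bigr => c _; rewrite mul1r.
Qed.

Lemma expected_gap0 x : E x 0 = f x - f xstar.
Proof.
have S0_gt0 : (0 < #|@sample_space n m 0|)%N.
  by apply/card_gt0P; exists (ffun0 (card_ord 0)); apply/forallP => -[].
rewrite /bcd_expected_gap (eq_bigr (fun=> f x - f xstar)); last first.
  by move=> ss _; rewrite enum_ord0.
by rewrite sumr_const -[(f x - f xstar) *+ _]mulr_natl mulKf ?pnatr_eq0 -?lt0n.
Qed.

Lemma expected_gap_succ x T :
  E x T.+1 = #|C|%:R^-1 * \sum_(c in C) E (bcd_step ls eta c x) T.
Proof.
rewrite /bcd_expected_gap card_sample_space_succ natrM invfM -mulrA; congr (_ * _).
rewrite sum_sample_space_succ mulr_sumr; apply: eq_bigr => c _.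
by congr (_ * _); apply: eq_bigr => ss _; rewrite map_ffun_cons.
Qed.

Lemma expected_gap_le (q N : R) : (m <= n)%N -> 0 <= q ->
  (forall x, #|C|%:R^-1 * \sum_(c in C) (f (bcd_step ls eta c x) - f xstar)
               <= q * (f x - f xstar) + N) ->
  forall T x, E x T <= q ^+ T * (f x - f xstar) + N * \sum_(j < T) q ^+ j.
Proof.
move=> mn q_ge0 step; elim=> [|T IH] x.
  by rewrite expected_gap0 big_ord0 mulr0 addr0 expr0 mul1r.
have C_gt0 : 0 < #|C|%:R :> R by rewrite ltr0n coord_choice_card_gt0.
rewrite expected_gap_succ; apply: le_trans (_ : #|C|%:R^-1 * \sum_(c in C)
    (q ^+ T * (f (bcd_step ls eta c x) - f xstar) + N * \sum_(j < T) q ^+ j) <= _).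
  by apply: ler_wpM2l; [rewrite invr_ge0 ltW | apply: ler_sum => c _; apply: IH].
rewrite big_split /= -mulr_sumr sumr_const -[(N * _) *+ _]mulr_natl mulrDr mulKf ?gt_eqF //.
have := ler_wpM2l (exprn_ge0 T q_ge0) (step x).
rewrite big_ord_recr exprSr /= mulrCA; lra.
Qed.

End ExpectedGap.

Lemma gamma_const_bounds (R : realType) (sigma L : R) : 0 < sigma -> sigma <= L ->
  0 < gamma_const sigma L <= sigma ^+ 2 / (128 * (L - sigma / 2) ^+ 2).
Proof.
move=> sigma_gt0 sigma_le_L; have L_gt0 := lt_le_trans sigma_gt0 sigma_le_L.
rewrite /gamma_const; set q := sigma / L; set w := Num.sqrt (1 - q).
have q_gt0 : 0 < q by rewrite divr_gt0.
have q_le1 : q <= 1 by rewrite ler_pdivrMr // mul1r.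
have w_ge0 : 0 <= w by apply: sqrtr_ge0.
have w2 : w ^+ 2 = 1 - q by rewrite sqr_sqrtr // subr_ge0.
have w_lt1 : w < 1 by rewrite ltNge; apply/negP => w_ge1; nra.
set t := (1 - w) / (1 + w).
have t_gt0 : 0 < t by rewrite divr_gt0 //; lra.
have t_le : t <= q / (1 + w ^+ 2).
  have -> : t = q / (1 + w) ^+ 2.
    by rewrite /t -[q](subKr 1) -w2; field; rewrite gt_eqF //; lra.
  rewrite ler_pdivrMr ?exprn_gt0 //; last by lra.
  have w2_gt0 : 0 < 1 + w ^+ 2 by rewrite w2; lra.
  rewrite mulrAC ler_pdivlMr // ler_pM2l //.
  by rewrite !expr2; nra.
apply/andP; split; first by rewrite mulr_gt0 ?divr_gt0 ?exprn_gt0.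
have -> : sigma ^+ 2 / (128 * (L - sigma / 2) ^+ 2) = 1 / 32 * (q / (1 + w ^+ 2)) ^+ 2.
  by rewrite w2 /q; field; rewrite !gt_eqF //; lra.
have t2_le : t ^+ 2 <= (q / (1 + w ^+ 2)) ^+ 2.
  by rewrite lerXn2r // !nnegrE ?(ltW t_gt0) // divr_ge0 ?(ltW q_gt0) // addr_ge0 ?sqr_ge0.
apply: le_trans (_ : q / 53 * (q / (1 + w ^+ 2)) ^+ 2 <= _).
  by rewrite ler_wpM2l // divr_ge0 ?ltW.
by rewrite ler_wpM2r ?exprn_ge0 //; lra.
Qed.

Lemma bcd_rate_bounds (R : realType) n m (sigma L : R) : (0 < m)%N -> (m <= n)%N ->
  0 < sigma -> sigma <= L ->
  m%:R * gamma_const sigma L / n%:R <= bcd_rate n m sigma (L - sigma / 2) <= 1.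
Proof.
move=> m_gt0 mn sigma_gt0 sigma_le_L.
have n_gt0 : 0 < n%:R :> R by rewrite ltr0n (leq_trans m_gt0).
have /andP [_ gamma_le] := gamma_const_bounds sigma_gt0 sigma_le_L.
have mn_ge0 : 0 <= m%:R / n%:R :> R by rewrite divr_ge0 ?ler0n ?ltW.
rewrite /bcd_rate mulrAC ler_wpM2l //=.
have mn_le1 : m%:R / n%:R <= 1 :> R by rewrite ler_pdivrMr // mul1r ler_nat.
have ratio_le1 : sigma ^+ 2 / (128 * (L - sigma / 2) ^+ 2) <= 1.
  have M_gt0 : 0 < L - sigma / 2 by lra.
  by rewrite ler_pdivrMr ?mulr_gt0 ?exprn_gt0 // mul1r !expr2; nra.
by rewrite mulr_ile1 // divr_ge0 ?sqr_ge0 // mulr_ge0 ?sqr_ge0.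
Qed.

Lemma bcd_noise_bounds (R : realType) n m (sigma L eta : R) : (0 < m)%N -> (m <= n)%N ->
  0 < sigma -> sigma <= L ->
  0 <= bcd_noise m sigma (L - sigma / 2) eta <= 8 * n%:R * L ^+ 2 / sigma * eta ^+ 2.
Proof.
move=> m_gt0 mn sigma_gt0 sigma_le_L; have L_gt0 := lt_le_trans sigma_gt0 sigma_le_L.
suff /andP [lo hi] : 0 <= sigma / 4 * m%:R + (L - sigma / 2) <= 8 * n%:R * L ^+ 2 / sigma.
  by rewrite /bcd_noise mulr_ge0 ?sqr_ge0 //= (ler_wpM2r (sqr_ge0 eta) hi).
have L_le : L <= L ^+ 2 / sigma by rewrite ler_pdivlMr // expr2 ler_pM2l.
have m_le : m%:R <= n%:R :> R by rewrite ler_nat.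
have n_ge1 : 1 <= n%:R :> R by rewrite ler1n (leq_trans m_gt0).
have h1 : sigma * m%:R <= L ^+ 2 / sigma * n%:R.
  by apply: ler_pM; rewrite ?ler0n ?(ltW sigma_gt0) ?(le_trans sigma_le_L L_le).
have h2 : L ^+ 2 / sigma <= L ^+ 2 / sigma * n%:R.
  by rewrite ler_peMr // divr_ge0 ?sqr_ge0 // ltW.
have m_ge0 : 0 <= m%:R :> R := ler0n R m.
apply/andP; split; nra.
Qed.

Lemma geometric_sum_le (R : realFieldType) (rho : R) T : 0 < rho -> rho <= 1 ->
  \sum_(j < T) (1 - rho) ^+ j <= rho^-1.
Proof.
move=> rho_gt0 rho_le1.
have sumE : rho * \sum_(j < T) (1 - rho) ^+ j = 1 - (1 - rho) ^+ T.
  elim: T => [|T IH]; first by rewrite big_ord0 mulr0 expr0 subrr.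
  by rewrite big_ord_recr /= mulrDr IH exprSr; ring.
rewrite -(ler_pM2l rho_gt0) sumE mulfV ?gt_eqF // lerBlDr lerDl exprn_ge0 //; lra.
Qed.

Lemma contraction_le (R : realType) (r rho F Z : R) T : 0 < r -> r <= rho <= 1 ->
  0 <= F -> 0 < Z -> ln (F / Z) <= r * T%:R -> (1 - rho) ^+ T * F <= Z.
Proof.
move=> r_gt0 /andP [r_le rho_le1] F_ge0 Z_gt0 lnT.
have [->|F_neq0] := eqVneq F 0; first by rewrite mulr0 ltW.
have FZ_gt0 : 0 < F / Z by rewrite divr_gt0 // lt_def F_neq0.
have decay : (1 - rho) ^+ T <= (F / Z)^-1.
  apply: le_trans (_ : expR (- r) ^+ T <= _).
    apply: le_trans (_ : (1 - r) ^+ T <= _); first by rewrite lerXn2r ?nnegrE; lra.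
    by rewrite lerXn2r ?nnegrE ?expR_ge0 //; [lra | exact: expR_ge1Dx].
  by rewrite -expRM_natr -(lnK FZ_gt0) -expRN ler_expR mulNr lerN2.
by have := ler_wpM2r F_ge0 decay; rewrite invf_div divfK.
Qed.

Lemma linear_rate_bound (R : realType) (r rho F N Z : R) T :
  0 < r -> r <= rho <= 1 -> 0 <= F -> 0 <= N <= Z -> 0 < Z ->
  ln (F / Z) <= r * T%:R ->
  (1 - rho) ^+ T * F + N * \sum_(j < T) (1 - rho) ^+ j <= Z * (1 + r^-1).
Proof.
move=> r_gt0 rho_bounds F_ge0 /andP [N_ge0 N_le] Z_gt0 lnT.
rewrite mulrDr mulr1; apply: lerD; first exact: contraction_le rho_bounds F_ge0 Z_gt0 lnT.
have /andP [r_le rho_le1] := rho_bounds; have rho_gt0 := lt_le_trans r_gt0 r_le.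
apply: le_trans (ler_wpM2l N_ge0 (geometric_sum_le T rho_gt0 rho_le1)) _.
apply: ler_pM => //; first by rewrite invr_ge0 ltW.
by rewrite lef_pV2 ?posrE.
Qed.

Lemma ln_le_of_ceil_le (R : realType) (r F Z : R) (T : nat) : 0 < r -> 0 < Z ->
  Num.ceil (r^-1 * ln (F * (1 + r^-1) / (Z * (1 + r^-1)))) <= T%:Z ->
  ln (F / Z) <= r * T%:R.
Proof.
move=> r_gt0 Z_gt0; have rV_gt0 : 0 < 1 + r^-1 by rewrite addr_gt0 ?invr_gt0.
rewrite invfM mulrACA mulfV ?gt_eqF // mulr1 -(ler_int R) => ceil_le.
have := le_trans (ceil_ge _) ceil_le.
by rewrite -(ler_pM2l r_gt0) mulVKf ?gt_eqF.
Qed.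

Theorem theorem1 (R : realType) (n m : nat) (sigma L eta : R)
  (f : 'rV[R]_n -> R^o) (xstar x0 : 'rV[R]_n)
  (ls : 'rV[R]_n -> 'rV[R]_n -> R -> R) :
  (1 <= n)%N -> (1 <= m)%N -> (m <= n)%N -> 0 < eta ->
  0 < sigma -> sigma <= L ->
  F_class sigma L f ->
  (forall y, f xstar <= f y) ->
  line_search_accurate f ls ->
  let gamma := gamma_const sigma L in
  let eps := eps_const n m sigma L eta in
  let T0 := Num.ceil (n%:R / (m%:R * gamma) *
              ln ((f x0 - f xstar) * (1 + n%:R / (m%:R * gamma)) / eps)) in
  forall T : nat, T0 <= T%:Z ->
    @bcd_expected_gap R n m f ls eta x0 xstar T <= eps.
Proof.
move=> _ m_gt0 mn eta_gt0 sigma_gt0 sigma_le_L f_F xstar_min ls_acc gamma eps T0 T T0_le_T.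
have n_gt0 := leq_trans m_gt0 mn.
set r := m%:R * gamma / n%:R; set Z := 8 * n%:R * L ^+ 2 / sigma * eta ^+ 2.
have /andP [gamma_gt0 _] := gamma_const_bounds sigma_gt0 sigma_le_L.
have r_gt0 : 0 < r by rewrite divr_gt0 ?ltr0n // mulr_gt0 ?ltr0n.
have L_gt0 := lt_le_trans sigma_gt0 sigma_le_L.
have Z_gt0 : 0 < Z by rewrite /Z !mulr_gt0 ?invr_gt0 ?ltr0n.
have eps_eq : eps = Z * (1 + r^-1) by rewrite /eps /eps_const invf_div /Z; ring.
have lower := strongly_convex_lower_model f_F.1.
have upper := smooth_upper_model sigma_gt0 sigma_le_L lower f_F.2.2.
have sigma_le_2M : sigma / 2 <= L - sigma / 2 by move: sigma_le_L; lra.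
have rate_bounds := bcd_rate_bounds m_gt0 mn sigma_gt0 sigma_le_L.
have step x := bcd_expected_step_le sigma_gt0 sigma_le_2M lower upper ls_acc eta_gt0
  xstar x m_gt0 mn.
have ln_le : ln ((f x0 - f xstar) / Z) <= r * T%:R.
  by move: T0_le_T; rewrite /T0 -invf_div -/r eps_eq; exact: ln_le_of_ceil_le.
apply: le_trans (expected_gap_le mn _ step T x0) _.
  by move: rate_bounds => /andP [_]; lra.
rewrite eps_eq; apply: linear_rate_bound r_gt0 rate_bounds _ _ Z_gt0 ln_le.
- by rewrite subr_ge0.
- by rewrite /Z bcd_noise_bounds.
Qed.
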